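(* Let $\ell\in\{1,2\}$. For each wavenumber $k>0$ let ${\cal H}\subset{\cal H}_0$, $a_\ell=a_\ell^{(k)}$, $C_{{\rm G1},\ell}$, $C_{{\rm G2},\ell}$, ${\mathcal A}_\ell={\mathcal A}_\ell^{(k)}$ be as in the context (the standing assumptions there hold), with ${\mathcal A}_\ell$ invertible. Suppose that given $k_0>0$ there exists $c>0$ such that $\|{\mathcal A}_\ell^{-1}\|_{{\cal H}_0\to{\cal H}}\ge c$ for all $k\ge k_0$. Given $p\in\mathbb{Z}^+$, let $({\cal H}_h)_{h>0}$ be a family of finite-dimensional subspaces of ${\cal H}$, and let $\Pi_h:{\cal H}\to{\cal H}_h$ be the ${\cal H}$-orthogonal projection. Suppose there exist $C_1,C_2,C_3>0$ such that, whenever $(kh)^{2p}\|{\mathcal A}_\ell^{-1}\|_{{\cal H}_0\to{\cal H}}\le C_1$, the following hold: for all $u\in{\cal H}$ and $u_h\in{\cal H}_h$ satisfying $a_\ell(u-u_h,v_h)=0$ for all $v_h\in{\cal H}_h$, $$\|u-u_h\|_{{\cal H}}\le C_2\Big(1+(kh)^p\|{\mathcal A}_\ell^{-1}\|_{{\cal H}_0\to{\cal H}}\Big)\|(I-\Pi_h)u\|_{{\cal H}},$$ and $$\|(I-\Pi_h){\mathcal A}_\ell^{-1}\|_{{\cal H}_0\to{\cal H}}\le C_3\Big(kh+(kh)^p\|{\mathcal A}_\ell^{-1}\|_{{\cal H}_0\to{\cal H}}\Big).$$ Then, given $0<\varepsilon\le C_1$, there exists $C_4>0$ such that if $(kh)^{2p}\|{\mathcal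 A}_\ell^{-1}\|_{{\cal H}_0\to{\cal H}}\le\varepsilon$ (and $k\ge k_0$), then $$\inf_{u_h\in{\cal H}_h\setminus\{0\}}\sup_{v_h\in{\cal H}_h\setminus\{0\}}\frac{|a_\ell(u_h,v_h)|}{\|u_h\|_{{\cal H}}\|v_h\|_{{\cal H}}}\ge\frac{1}{(C_{{\rm G1},\ell})^{-1}\Big(1+C_{{\rm G2},\ell}(1+C_2C_3C_4)\|{\mathcal A}_\ell^{-1}\|_{{\cal H}_0\to{\cal H}}\Big)}.$$
   Context: Standing assumptions: ${\cal H}\subset{\cal H}_0$ are complex Hilbert spaces with $\|v\|_{{\cal H}_0}\le\|v\|_{{\cal H}}$ for $v\in{\cal H}$, and ${\cal H}_0$ is identified with its dual so that ${\cal H}\subset{\cal H}_0\subset{\cal H}^*$. ${\mathcal D}:{\cal H}\to{\cal H}_0$ is linear with $\|{\mathcal D}\|_{{\cal H}\to{\cal H}_0}\le 1$; $b(\cdot,\cdot)$ is a continuous sesquilinear form on ${\cal H}$; for $\ell=1,2$, $\mu_\ell^{-1}:{\cal H}_0\to{\cal H}_0$ and $\epsilon_\ell:{\cal H}_0\to{\cal H}_0$ are bounded linear operators, and $a_\ell(u,v):=(\mu_\ell^{-1}{\mathcal D}u,{\mathcal D}v)_{{\cal H}_0}+b(u,v)-(\epsilon_\ell u,v)_{{\cal H}_0}$ (these objects may depend on the parameter $k$). For $\ell=1,2$ there exist $C_{{\rm G1},\ell},C_{{\rm G2},\ell}>0$ with $|a_\ell(v,v)+C_{{\rm G2},\ell}\|v\|_{{\cal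 H}_0}^2|\ge C_{{\rm G1},\ell}\|v\|_{{\cal H}}^2$ for all $v\in{\cal H}$. ${\mathcal A}_\ell:{\cal H}\to{\cal H}^*$ is defined by $\langle{\mathcal A}_\ell u,v\rangle_{{\cal H}^*\times{\cal H}}=a_\ell(u,v)$, and $\|{\mathcal A}_\ell^{-1}\|_{{\cal H}_0\to{\cal H}}$ is the norm of ${\mathcal A}_\ell^{-1}$ restricted to ${\cal H}_0\subset{\cal H}^*$ as a map into ${\cal H}$. *)

From HB Require Import structures.
From mathcomp Require Import all_boot all_order all_algebra.
From mathcomp Require Import complex.
From mathcomp Require Import boolp classical_sets reals.
Set Implicit Arguments. Unset Strict Implicit. Unset Printing Implicit Defensive.
Import Order.TTheory GRing.Theory Num.Theory.
Local Open Scope ring_scope.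
Local Open Scope classical_set_scope.

Section Defs.
Variable R : realType.
Local Notation C := (R[i]).

Definition cabs (z : C) : R := Num.sqrt (complex.Re z ^+ 2 + complex.Im z ^+ 2).
Definition cconj (z : C) : C := conjc z.

Definition ipnorm (V : lmodType C) (ip : V -> V -> C) (u : V) : R :=
  Num.sqrt (complex.Re (ip u u)).

Definition inner_product (V : lmodType C) (ip : V -> V -> C) : Prop :=
  [/\ forall u v w, ip (u + v) w = ip u w + ip v w,
      forall (c : C) u w, ip (c *: u) w = c * ip u w,
      forall u v, ip v u = cconj (ip u v),
      forall u, 0 <= ip u u &
      forall u, ip u u = 0 -> u = 0].

Definition ip_complete (V : lmodType C) (ip : V -> V -> C) : Prop :=
  forall s : nat -> V,
    (forall e : R, 0 < e -> exists N, forall m n, (N <= m)%N -> (N <= n)%N ->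
        ipnorm ip (s m - s n) < e) ->
    exists l : V, forall e : R, 0 < e -> exists N, forall n, (N <= n)%N ->
        ipnorm ip (s n - l) < e.

Record hilbert := Hilbert {
  hspace :> lmodType C;
  hip : hspace -> hspace -> C;
  hip_inner : inner_product hip;
  hip_complete : ip_complete hip }.

Definition hnorm (X : hilbert) (u : X) : R := ipnorm (@hip X) u.

Definition linear_map (X Y : lmodType C) (T : X -> Y) : Prop :=
  forall (c : C) u v, T (c *: u + v) = c *: T u + T v.

Definition bounded_op (X Y : hilbert) (T : X -> Y) : Prop :=
  exists M : R, forall u, hnorm (T u) <= M * hnorm u.

(* Standing assumptions of the context, for one fixed value of k *)
Record setting := Setting {
  sH0 : hilbert;
  sH : hilbert;
  emb : sH -> sH0;
  emb_linear : linear_map emb;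
  emb_inj : injective emb;
  emb_norm : forall v, hnorm (emb v) <= hnorm v;
  opD : sH -> sH0;
  opD_linear : linear_map opD;
  opD_norm : forall v, hnorm (opD v) <= hnorm v;
  formb : sH -> sH -> C;
  formb_lin1 : forall (c : C) u u' v, formb (c *: u + u') v = c * formb u v + formb u' v;
  formb_lin2 : forall (c : C) u v v', formb u (c *: v + v') = cconj c * formb u v + formb u v';
  formb_cont : exists M : R, forall u v, cabs (formb u v) <= M * hnorm u * hnorm v;
  opmuinv : sH0 -> sH0;
  opmuinv_linear : linear_map opmuinv;
  opmuinv_bdd : bounded_op opmuinv;
  opeps : sH0 -> sH0;
  opeps_linear : linear_map opeps;
  opeps_bdd : bounded_op opeps }.

Definition forma (S : setting) (u v : sH S) : C :=
  hip (opmuinv (opD u)) (opD v) + formb u v - hip (opeps (emb u)) (emb v).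

Definition garding (S : setting) (CG1 CG2 : R) : Prop :=
  0 < CG1 /\ 0 < CG2 /\
  forall v : sH S, CG1 * hnorm v ^+ 2 <=
     cabs (forma v v + ((CG2 * hnorm (emb v) ^+ 2)%:C)%C).

(* bounded antilinear functionals on H, i.e. elements of H^* *)
Definition antidual (S : setting) (F : sH S -> C) : Prop :=
  (forall (c : C) v v', F (c *: v + v') = cconj c * F v + F v') /\
  exists M : R, forall v, cabs (F v) <= M * hnorm v.

(* A : H -> H^*, <A u, v> = a(u,v), is invertible (bijective, with bounded
   inverse) *)
Definition A_invertible (S : setting) : Prop :=
  (forall F, antidual F -> exists! u : sH S, forall v, forma u v = F v) /\
  exists M : R, forall F (u : sH S) (K : R), antidual F ->
     (forall v, forma u v = F v) ->
     (forall v, cabs (F v) <= K * hnorm v) -> hnorm u <= M * K.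

(* u = A^{-1} f for f in H_0 ⊂ H^* (f acting as v |-> (f, v)_{H0}) *)
Definition solves (S : setting) (f : sH0 S) (u : sH S) : Prop :=
  forall v, forma u v = hip f (emb v).

(* || T A^{-1} ||_{H0 -> H} for T : H -> H *)
Definition opnorm_Ainv (S : setting) (T : sH S -> sH S) : R :=
  sup [set r : R | exists (f : sH0 S) (u : sH S),
         [/\ f != 0, solves f u & r = hnorm (T u) / hnorm f]].

Definition Ainv_norm (S : setting) : R := opnorm_Ainv (@id (sH S)).

Definition subspace (V : lmodType C) (P : set V) : Prop :=
  P 0 /\ forall (c : C) u v, P u -> P v -> P (c *: u + v).

Definition fin_dim_subspace (V : lmodType C) (P : set V) : Prop :=
  subspace P /\ exists (n : nat) (e : 'I_n -> V), (forall i, P (e i)) /\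
    forall v, P v -> exists c : 'I_n -> C, v = \sum_(i < n) c i *: e i.

Definition orth_proj (X : hilbert) (P : set X) (Pi : X -> X) : Prop :=
  forall v, P (Pi v) /\ forall w, P w -> hip (v - Pi v) w = 0.

Definition infsup_inner (S : setting) (P : set (sH S)) (u : sH S) : R :=
  sup [set r : R | exists v, [/\ P v, v != 0 &
         r = cabs (forma u v) / (hnorm u * hnorm v)]].

End Defs.

(* Fix u_h in H_h.  By the Garding inequality the shifted form
   a(u, v) + C_G2 (u, v)_{H_0} is coercive on H_h, so it represents a(u_h, .) on
   H_h by some x in H_h, and then |a(u_h, x)| >= C_G1 ||x||^2.  Quasi-optimality
   makes Galerkin projection onto H_h well defined, and u_h = x + C_G2 w_h where
   w_h is the Galerkin approximation of w = A^{-1} x.  The Galerkin error bound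
   gives ||w_h|| <= (||A^{-1}|| + C_2 (1 + (kh)^p ||A^{-1}||) C_3 (kh + (kh)^p
   ||A^{-1}||)) ||x||, and when (kh)^{2p} ||A^{-1}|| <= eps and ||A^{-1}|| >= c the
   product of the two factors is at most C_4 ||A^{-1}||.  Hence
   ||u_h|| <= (1 + C_G2 (1 + C_2 C_3 C_4) ||A^{-1}||) ||x||, and testing a(u_h, .)
   with v_h = x gives the inf-sup bound. *)

From HB Require Import structures.
From mathcomp Require Import all_boot all_order all_algebra.
From mathcomp Require Import complex.
From mathcomp Require Import boolp classical_sets reals.
From mathcomp Require Import ring lra.
Set Implicit Arguments. Unset Strict Implicit. Unset Printing Implicit Defensive.
Import Order.TTheory GRing.Theory Num.Theory.
Local Open Scope ring_scope.
Local Open Scope classical_set_scope.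
Local Open Scope complex_scope.

Section ComplexModulus.
Variable R : realType.
Implicit Types (z w : R[i]) (r : R).

Lemma cabsE z : (cabs z)%:C = `|z|.
Proof. by rewrite normc_def. Qed.

Lemma cabs_ge0 z : 0 <= cabs z.
Proof. exact: sqrtr_ge0. Qed.

Lemma cabsD z w : cabs (z + w) <= cabs z + cabs w.
Proof. by rewrite -lecR rmorphD /= !cabsE ler_normD. Qed.

Lemma cabsN z : cabs (- z) = cabs z.
Proof. by apply: complexI; rewrite !cabsE normrN. Qed.

Lemma cabsR r : cabs r%:C = `|r|.
Proof. by rewrite /cabs /= expr0n /= addr0 sqrtr_sqr. Qed.

Lemma Re_le_cabs z : complex.Re z <= cabs z.
Proof.
case: z => a b; rewrite /cabs /= (le_trans (ler_norm a)) // -sqrtr_sqr.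
by rewrite ler_wsqrtr // lerDl sqr_ge0.
Qed.

Lemma mulcJ z : z * cconj z = (cabs z ^+ 2)%:C.
Proof.
case: z => a b; rewrite /cabs /cconj /= sqr_sqrtr ?addr_ge0 ?sqr_ge0 //.
by apply/eqP; rewrite eq_complex /= !expr2; apply/andP; split; apply/eqP; ring.
Qed.

Lemma ReD z w : complex.Re (z + w) = complex.Re z + complex.Re w.
Proof. by case: z; case: w. Qed.

Lemma cconjM z w : cconj (z * w) = cconj z * cconj w.
Proof. exact: rmorphM. Qed.

Lemma cconjR r : cconj r%:C = r%:C.
Proof. by rewrite /cconj /= oppr0. Qed.

End ComplexModulus.

Section InnerProduct.
Variables (R : realType) (V : lmodType R[i]) (ip : V -> V -> R[i]).
Hypothesis ipP : inner_product ip.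
Implicit Types u v w : V.

Lemma ipDl u v w : ip (u + v) w = ip u w + ip v w.
Proof. by case: ipP => ->. Qed.

Lemma ipZl c u w : ip (c *: u) w = c * ip u w.
Proof. by case: ipP => _ ->. Qed.

Lemma ipC u v : ip v u = cconj (ip u v).
Proof. by case: ipP => _ _ ->. Qed.

Lemma ip_ge0 u : 0 <= ip u u.
Proof. by case: ipP => _ _ _ ->. Qed.

Lemma ip_eq0 u : ip u u = 0 -> u = 0.
Proof. by case: ipP => _ _ _ _; apply. Qed.

Lemma ip0l w : ip 0 w = 0.
Proof. by rewrite -(scale0r (0 : V)) ipZl mul0r. Qed.

Lemma ipBl u v w : ip (u - v) w = ip u w - ip v w.
Proof. by rewrite ipDl -scaleN1r ipZl mulN1r. Qed.

Lemma conjc_ip u v : conjc (ip u v) = ip v u.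
Proof. by rewrite [ip u v]ipC /cconj conjcK. Qed.

Lemma ipDr u v w : ip u (v + w) = ip u v + ip u w.
Proof. by rewrite ipC ipDl /cconj rmorphD /= !conjc_ip. Qed.

Lemma ipZr c u v : ip u (c *: v) = cconj c * ip u v.
Proof. by rewrite ipC ipZl /cconj rmorphM /= conjc_ip. Qed.

Lemma ipBr u v w : ip u (v - w) = ip u v - ip u w.
Proof. by rewrite ipDr -scaleN1r ipZr /cconj rmorphN1 mulN1r. Qed.

Lemma ip_norm u : ip u u = (ipnorm ip u ^+ 2)%:C.
Proof.
have := ip_ge0 u; rewrite lecE /= => /andP[/eqP Im0 Re_ge0].
by rewrite sqr_sqrtr //; case: (ip u u) Im0 => a b /= ->.
Qed.

Lemma ipnorm_ge0 u : 0 <= ipnorm ip u.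
Proof. exact: sqrtr_ge0. Qed.

Lemma ipnorm_eq0 u : ipnorm ip u = 0 -> u = 0.
Proof. by move=> u0; apply: ip_eq0; rewrite ip_norm u0 expr0n. Qed.

Lemma ipnorm0 : ipnorm ip (0 : V) = 0.
Proof. by rewrite /ipnorm ip0l /= sqrtr0. Qed.

Lemma ip0r u : ip u 0 = 0.
Proof. by rewrite ipC ip0l /cconj conjc0. Qed.

(* Expanding [0 <= ip (u - t v) (u - t v)] with [t = s * ip u v] for real [s]. *)
Lemma ip_quadratic_ge0 u v (s : R) :
  0 <= ipnorm ip u ^+ 2 - 2 * s * cabs (ip u v) ^+ 2
         + s ^+ 2 * cabs (ip u v) ^+ 2 * ipnorm ip v ^+ 2.
Proof.
have := ip_ge0 (u - (s%:C * ip u v) *: v).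
rewrite !(ipBl, ipBr, ipZl, ipZr) [ip v u]ipC !ip_norm cconjM cconjR => h.
rewrite -lecR (le_trans h) // le_eqVlt; apply/orP; left; apply/eqP.
set z := ip u v; transitivity ((ipnorm ip u ^+ 2)%:C - 2 * s%:C * (z * cconj z)
  + s%:C ^+ 2 * (z * cconj z) * (ipnorm ip v ^+ 2)%:C); first by ring.
by rewrite mulcJ; ring.
Qed.

Lemma cauchy_schwarz u v : cabs (ip u v) <= ipnorm ip u * ipnorm ip v.
Proof.
have [v0|v_neq0] := eqVneq (ipnorm ip v) 0.
  by rewrite (ipnorm_eq0 v0) ip0r (cabsR 0) normr0 mulr_ge0 ?ipnorm_ge0.
have := ip_quadratic_ge0 u v (ipnorm ip v ^- 2).
have := cabs_ge0 (ip u v); have := ipnorm_ge0 u.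
have v_gt0 : 0 < ipnorm ip v by rewrite lt_def v_neq0 ipnorm_ge0.
move: (ipnorm ip u) (ipnorm ip v) (cabs (ip u v)) v_gt0 => a b z b_gt0 a_ge0 z_ge0.
have -> : b ^- 2 ^+ 2 * z ^+ 2 * b ^+ 2 = b ^- 2 * z ^+ 2 by field; rewrite gt_eqF.
move=> quad; rewrite -(@ler_pXn2r _ 2) ?nnegrE ?mulr_ge0 // ?(ltW b_gt0) //.
by rewrite exprMn -ler_pdivrMr ?exprn_gt0 // mulrC; lra.
Qed.

Lemma ipnormD u v : ipnorm ip (u + v) <= ipnorm ip u + ipnorm ip v.
Proof.
rewrite -(ger0_norm (addr_ge0 (ipnorm_ge0 u) (ipnorm_ge0 v))) -sqrtr_sqr.
apply: ler_wsqrtr; rewrite !(ipDl, ipDr) !ReD !ip_norm /=.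
have := le_trans (Re_le_cabs (ip u v)) (cauchy_schwarz u v).
have := le_trans (Re_le_cabs (ip v u)) (cauchy_schwarz v u).
nra.
Qed.

Lemma ipnormZ c u : ipnorm ip (c *: u) = cabs c * ipnorm ip u.
Proof.
rewrite {1}/ipnorm ipZl ipZr mulrA mulcJ ip_norm -rmorphM /= -exprMn sqrtr_sqr.
by rewrite ger0_norm // mulr_ge0 ?cabs_ge0 ?ipnorm_ge0.
Qed.

Lemma ipnormN u : ipnorm ip (- u) = ipnorm ip u.
Proof. by rewrite -scaleN1r ipnormZ cabsN (cabsR 1) normr1 mul1r. Qed.

End InnerProduct.

Section HilbertNorm.
Variables (R : realType) (X : hilbert R).
Implicit Types u v : X.

Lemma hnorm_ge0 u : 0 <= hnorm u.
Proof. exact: ipnorm_ge0. Qed.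

Lemma hnorm_eq0 u : hnorm u = 0 -> u = 0.
Proof. exact: (ipnorm_eq0 (hip_inner X)). Qed.

Lemma hnorm_gt0 u : u != 0 -> 0 < hnorm u.
Proof. by move=> u0; rewrite lt_def hnorm_ge0 andbT; apply: contraNneq u0 => /hnorm_eq0 ->. Qed.

Lemma hnorm0 : hnorm (0 : X) = 0.
Proof. exact: (ipnorm0 (hip_inner X)). Qed.

Lemma hnormN u : hnorm (- u) = hnorm u.
Proof. exact: (ipnormN (hip_inner X)). Qed.

Lemma hnormD u v : hnorm (u + v) <= hnorm u + hnorm v.
Proof. exact: (ipnormD (hip_inner X)). Qed.

Lemma hnormB u v : hnorm (u - v) <= hnorm u + hnorm v.
Proof. by rewrite -(hnormN v) hnormD. Qed.

Lemma hnormZ c u : hnorm (c *: u) = cabs c * hnorm u.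
Proof. exact: (ipnormZ (hip_inner X)). Qed.

Lemma hip_norm u : hip u u = (hnorm u ^+ 2)%:C.
Proof. exact: (ip_norm (hip_inner X)). Qed.

Lemma hip_cauchy_schwarz u v : cabs (hip u v) <= hnorm u * hnorm v.
Proof. exact: (cauchy_schwarz (hip_inner X)). Qed.

End HilbertNorm.

Section Semilinear.
Variables (R : realType) (V : lmodType R[i]) (sigma : {rmorphism R[i] -> R[i]}).
Variable F : V -> R[i].
Hypothesis F_semilinear : forall c v v', F (c *: v + v') = sigma c * F v + F v'.

Lemma semilinear0 : F 0 = 0.
Proof.
have := F_semilinear 1 0 0; rewrite scale1r addr0 rmorph1 mul1r -{1}[F 0]addr0.
by move/addrI.
Qed.

Lemma semilinear_sum n (d : 'I_n -> R[i]) (f : 'I_n -> V) :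
  F (\sum_(k < n) d k *: f k) = \sum_(k < n) sigma (d k) * F (f k).
Proof. by elim/big_rec2: _ => [|k y x _ <-]; rewrite ?semilinear0 ?F_semilinear. Qed.

End Semilinear.

Section FiniteSpan.
Variables (R : realType) (V : lmodType R[i]).

Definition span_of n (e : 'I_n -> V) (v : V) : Prop :=
  exists c : 'I_n -> R[i], v = \sum_(i < n) c i *: e i.

Definition free_family n (e : 'I_n -> V) : Prop :=
  forall c : 'I_n -> R[i], \sum_(i < n) c i *: e i = 0 -> forall i, c i = 0.

Lemma span_of_dependent n (e : 'I_n.+1 -> V) (c : 'I_n.+1 -> R[i]) i :
  \sum_(j < n.+1) c j *: e j = 0 -> c i != 0 ->
  forall v, span_of e v <-> span_of (fun k => e (lift i k)) v.
Proof.
rewrite (bigD1_ord i) //= => /eqP; rewrite addr_eq0 => /eqP dep ci0 v; split.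
- have ei : e i = - (c i)^-1 *: \sum_(k < n) c (lift i k) *: e (lift i k).
    by rewrite scaleNr -scalerN -dep scalerA mulVf // scale1r.
  case=> d ->; rewrite (bigD1_ord i) //= ei scalerA.
  exists (fun k => d (lift i k) - d i * (c i)^-1 * c (lift i k)).
  rewrite mulrN scaleNr addrC scaler_sumr -sumrB.
  by apply: eq_bigr => k _; rewrite scalerBl scalerA.
- case=> d ->; exists (fun j => oapp d 0 (unlift i j)).
  rewrite (bigD1_ord i) //= unlift_none scale0r add0r.
  by apply: eq_bigr => k _; rewrite liftK.
Qed.

Lemma free_subfamily n (e : 'I_n -> V) :
  exists m (f : 'I_m -> V), free_family f /\ forall v, span_of e v <-> span_of f v.
Proof.
elim: n e => [|n IH] e; first by exists 0%N, e; split => // c _ [].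
have [free_e|dep_e] := pselect (free_family e); first by exists n.+1, e.
have [c dep [i ci0]] : exists2 c : 'I_n.+1 -> R[i],
    \sum_(j < n.+1) c j *: e j = 0 & exists i, c i != 0.
  move/existsNP: dep_e => [c /not_implyP [dep /existsNP [i /eqP ci0]]].
  by exists c => //; exists i.
have [m [f [free_f span_f]]] := IH (fun k => e (lift i k)).
exists m, f; split => // v; rewrite -span_f; exact: span_of_dependent dep ci0 v.
Qed.

End FiniteSpan.

Section SesquilinearForm.
Variables (R : realType) (V : lmodType R[i]) (B : V -> V -> R[i]).
Hypothesis B_linl : forall c u u' w, B (c *: u + u') w = c * B u w + B u' w.
Hypothesis B_antilinr : forall c u v v', B u (c *: v + v') = cconj c * B u v + B u v'.

Lemma form0l w : B 0 w = 0.
Proof. exact: (@semilinear0 _ _ idfun (B^~ w)). Qed.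

Lemma formDl u u' w : B (u + u') w = B u w + B u' w.
Proof. by rewrite -[u]scale1r B_linl mul1r scale1r. Qed.

Lemma formZl c u w : B (c *: u) w = c * B u w.
Proof. by rewrite -[c *: u]addr0 B_linl form0l addr0. Qed.

Lemma formBl u u' w : B (u - u') w = B u w - B u' w.
Proof. by rewrite formDl -scaleN1r formZl mulN1r. Qed.

Definition gram m (f : 'I_m -> V) : 'M[R[i]]_m := \matrix_(i, j) B (f i) (f j).

Lemma gram_mulmx m (f : 'I_m -> V) (c : 'rV_m) j :
  B (\sum_(k < m) c 0 k *: f k) (f j) = (c *m gram f) 0 j.
Proof.
rewrite (@semilinear_sum _ _ idfun (B^~ (f j))) // mxE.
by apply: eq_bigr => k _; rewrite mxE.
Qed.

Lemma gram_unitmx m (f : 'I_m -> V) : free_family f ->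
  (forall x, span_of f x -> (forall v, span_of f v -> B x v = 0) -> x = 0) ->
  gram f \in unitmx.
Proof.
move=> free_f nondeg; rewrite -row_free_unit -kermx_eq0; apply/rowV0P => c.
move/sub_kermxP => cG0.
have x0 : \sum_(k < m) c 0 k *: f k = 0.
  apply: nondeg => [|v [d ->]]; first by exists (c 0).
  rewrite (@semilinear_sum _ _ conjc (B _)) //; apply: big1 => j _.
  by rewrite gram_mulmx cG0 mxE mulr0.
by apply/rowP => k; rewrite mxE (free_f _ x0).
Qed.

Lemma form_represents (P : set V) n (e : 'I_n -> V) :
  (forall v, P v <-> span_of e v) ->
  (forall x, P x -> (forall v, P v -> B x v = 0) -> x = 0) ->
  forall phi : V -> R[i], (forall c v v', phi (c *: v + v') = cconj c * phi v + phi v') ->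
  exists x, P x /\ forall v, P v -> B x v = phi v.
Proof.
move=> Pe nondeg phi phi_antilin.
have [m [f [free_f span_f]]] := free_subfamily e.
have Pf v : P v <-> span_of f v by rewrite Pe span_f.
have G_unit : gram f \in unitmx.
  by apply: gram_unitmx => // x /Pf Px x0; apply: nondeg => // v /Pf; apply: x0.
pose c := (\row_j phi (f j)) *m invmx (gram f).
exists (\sum_(k < m) c 0 k *: f k); split; first by apply/Pf; exists (c 0).
move=> v /Pf [d ->].
rewrite (@semilinear_sum _ _ conjc (B _)) // (@semilinear_sum _ _ conjc phi) //.
by apply: eq_bigr => j _; rewrite gram_mulmx mulmxKV // mxE.
Qed.

End SesquilinearForm.

Section Subspace.
Variables (R : realType) (V : lmodType R[i]) (P : set V).
Hypothesis P_subspace : subspace P.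

Lemma subspace0 : P 0.
Proof. by case: P_subspace. Qed.

Lemma subspaceD u v : P u -> P v -> P (u + v).
Proof. by case: P_subspace => _ P_closed Pu Pv; rewrite -[u]scale1r; apply: P_closed. Qed.

Lemma subspaceZ c u : P u -> P (c *: u).
Proof. by case: P_subspace => P0 P_closed Pu; rewrite -[_ *: _]addr0; apply: P_closed. Qed.

Lemma subspaceB u v : P u -> P v -> P (u - v).
Proof. by move=> Pu Pv; apply: subspaceD => //; rewrite -scaleN1r; apply: subspaceZ. Qed.

End Subspace.

Lemma fin_dim_span (R : realType) (V : lmodType R[i]) (P : set V) :
  fin_dim_subspace P -> exists n (e : 'I_n -> V), forall v, P v <-> span_of e v.
Proof.
case=> P_subspace [n [e [Pe span_e]]]; exists n, e => v; split; first exact: span_e.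
case=> c ->; elim/big_rec: _ => [|k y _ Py]; first exact: subspace0.
by apply: subspaceD => //; apply: subspaceZ.
Qed.

Section OrthogonalProjection.
Variables (R : realType) (X : hilbert R) (P : set X) (Pi : X -> X).
Hypothesis Pi_orth : orth_proj P Pi.

Lemma orth_proj0 : Pi 0 = 0.
Proof.
have [P_Pi0 orth] := Pi_orth 0.
have := orth _ P_Pi0; rewrite sub0r -scaleN1r (ipZl (hip_inner X)) mulN1r.
by move/eqP; rewrite oppr_eq0 => /eqP /(ip_eq0 (hip_inner X)).
Qed.

Lemma orth_proj_residual_le u : hnorm (u - Pi u) <= hnorm u.
Proof.
have [P_Piu orth] := Pi_orth u.
have e : hip (u - Pi u) u = (hnorm (u - Pi u) ^+ 2)%:C.
  rewrite -[Y in hip _ Y = _](subrK (Pi u)) (ipDr (hip_inner X)) (orth _ P_Piu).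
  by rewrite addr0 hip_norm.
have : hnorm (u - Pi u) ^+ 2 <= hnorm (u - Pi u) * hnorm u.
  have := Re_le_cabs (hip (u - Pi u) u); rewrite {1}e /= => /le_trans; apply.
  exact: hip_cauchy_schwarz.
have := hnorm_ge0 (u - Pi u); have := hnorm_ge0 u; nra.
Qed.

End OrthogonalProjection.

Lemma linear_map0 (R : realType) (X Y : lmodType R[i]) (T : X -> Y) :
  linear_map T -> T 0 = 0.
Proof.
move=> T_lin; have := T_lin 1 0 0; rewrite !scale1r addr0 -{1}[T 0]addr0.
by move/addrI.
Qed.

Lemma bounded_op_nonneg (R : realType) (X Y : hilbert R) (T : X -> Y) :
  bounded_op T -> exists2 M, 0 <= M & forall u, hnorm (T u) <= M * hnorm u.
Proof.
case=> M TM; exists (Num.max M 0); first by rewrite le_max lexx orbT.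
by move=> u; rewrite (le_trans (TM u)) // ler_wpM2r ?hnorm_ge0 // le_max lexx.
Qed.

Section Setting.
Variables (R : realType) (S : setting R).
Implicit Types u v w : sH S.

Lemma forma_linl c u u' w : forma (c *: u + u') w = c * forma u w + forma u' w.
Proof.
rewrite /forma formb_lin1 opD_linear opmuinv_linear emb_linear opeps_linear.
by rewrite !(ipDl (hip_inner _)) !(ipZl (hip_inner _)); ring.
Qed.

Lemma forma_antilinr c u v v' : forma u (c *: v + v') = cconj c * forma u v + forma u v'.
Proof.
rewrite /forma formb_lin2 opD_linear emb_linear.
by rewrite !(ipDr (hip_inner _)) !(ipZr (hip_inner _)); ring.
Qed.

Lemma forma_bounded : exists M, forall u v, cabs (forma u v) <= M * hnorm u * hnorm v.
Proof.
have [M1 M1_ge0 M1P] := bounded_op_nonneg (@opmuinv_bdd _ S).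
have [M2 M2_ge0 M2P] := bounded_op_nonneg (@opeps_bdd _ S).
have [Mb MbP] := @formb_cont _ S.
have hip_le (T : sH0 S -> sH0 S) (J : sH S -> sH0 S) M : 0 <= M ->
    (forall f, hnorm (T f) <= M * hnorm f) -> (forall u, hnorm (J u) <= hnorm u) ->
    forall u v, cabs (hip (T (J u)) (J v)) <= M * hnorm u * hnorm v.
  move=> M_ge0 TM J1 u v; rewrite (le_trans (hip_cauchy_schwarz _ _)) //.
  apply: ler_pM; rewrite ?hnorm_ge0 ?J1 //.
  exact: le_trans (TM _) (ler_wpM2l M_ge0 (J1 u)).
exists (M1 + Mb + M2) => u v; rewrite /forma !mulrDl.
rewrite (le_trans (cabsD _ _)) // cabsN lerD //; last by apply: hip_le => //; apply: emb_norm.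
by rewrite (le_trans (cabsD _ _)) // lerD //; apply: hip_le => //; apply: opD_norm.
Qed.

Lemma infsup_inner_ge (P : set (sH S)) u v : u != 0 -> P v -> v != 0 ->
  cabs (forma u v) / (hnorm u * hnorm v) <= infsup_inner P u.
Proof.
move=> u0 Pv v0; apply: ub_le_sup; last by exists v.
have [M MP] := forma_bounded; exists M => _ [w [_ w0 ->]].
by rewrite ler_pdivrMr ?mulr_gt0 ?hnorm_gt0 // mulrA.
Qed.

End Setting.

Section SolutionOperator.
Variables (R : realType) (S : setting R).
Hypothesis A_inv : A_invertible S.

Lemma antidual_emb (f : sH0 S) : antidual (fun v : sH S => hip f (emb v)).
Proof.
split=> [c v v'|]; first by rewrite emb_linear (ipDr (hip_inner _)) (ipZr (hip_inner _)).
exists (hnorm f) => v; rewrite (le_trans (hip_cauchy_schwarz _ _)) //.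
by rewrite ler_wpM2l ?hnorm_ge0 ?emb_norm.
Qed.

Lemma solves_exists (f : sH0 S) : exists u, solves f u.
Proof. by have [u [fu _]] := A_inv.1 _ (antidual_emb f); exists u. Qed.

Lemma solves_bounded : exists M, forall (f : sH0 S) u, solves f u -> hnorm u <= M * hnorm f.
Proof.
have [_ [M MP]] := A_inv; exists M => f u fu; apply: MP (antidual_emb f) fu _ => v.
by rewrite (le_trans (hip_cauchy_schwarz _ _)) // ler_wpM2l ?hnorm_ge0 ?emb_norm.
Qed.

Lemma opnorm_Ainv_ge (T : sH S -> sH S) (f : sH0 S) u :
  (forall u, hnorm (T u) <= hnorm u) -> f != 0 -> solves f u ->
  hnorm (T u) / hnorm f <= opnorm_Ainv T.
Proof.
move=> T1 f0 fu; apply: ub_le_sup; last by exists f, u.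
have [M MP] := solves_bounded; exists M => _ [g [w [g0 gw ->]]].
by rewrite ler_pdivrMr ?hnorm_gt0 // (le_trans (T1 _)) ?MP.
Qed.

Lemma opnorm_Ainv_ge0 (T : sH S -> sH S) (f : sH0 S) :
  (forall u, hnorm (T u) <= hnorm u) -> f != 0 -> 0 <= opnorm_Ainv T.
Proof.
move=> T1 f0; have [u fu] := solves_exists f.
by rewrite (le_trans _ (opnorm_Ainv_ge T1 f0 fu)) // divr_ge0 ?hnorm_ge0.
Qed.

Lemma Ainv_norm_ge (f : sH0 S) u : f != 0 -> solves f u -> hnorm u <= Ainv_norm S * hnorm f.
Proof.
by move=> f0 fu; rewrite -ler_pdivrMr ?hnorm_gt0 //; apply: (opnorm_Ainv_ge (T := id)).
Qed.

End SolutionOperator.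

Definition quasi_optimal (R : realType) (S : setting R) (P : set (sH S))
    (Pi : sH S -> sH S) (K : R) : Prop :=
  forall u uh, P uh -> (forall vh, P vh -> forma (u - uh) vh = 0) ->
    hnorm (u - uh) <= K * hnorm (u - Pi u).

Section Galerkin.
Variables (R : realType) (S : setting R) (P : set (sH S)) (Pi : sH S -> sH S) (K : R).
Hypotheses (P_fin : fin_dim_subspace P) (Pi_orth : orth_proj P Pi).
Hypothesis quasi_opt : quasi_optimal P Pi K.

Lemma galerkin_kernel_eq0 z : P z -> (forall v, P v -> forma z v = 0) -> z = 0.
Proof.
move=> Pz z_orth; apply: hnorm_eq0; apply/eqP; rewrite eq_le hnorm_ge0 andbT.
rewrite -hnormN -sub0r (le_trans (quasi_opt Pz _)) //; last first.
  by rewrite (orth_proj0 Pi_orth) subr0 hnorm0 mulr0.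
move=> v Pv; rewrite (formBl (@forma_linl _ S)) (form0l (@forma_linl _ S)).
by rewrite z_orth // subr0.
Qed.

Lemma galerkin_exists u : exists uh, P uh /\ forall v, P v -> forma uh v = forma u v.
Proof.
have [n [e Pe]] := fin_dim_span P_fin.
apply: (form_represents (@forma_linl _ S) (@forma_antilinr _ S) Pe galerkin_kernel_eq0).
by move=> c v v'; rewrite forma_antilinr.
Qed.

Lemma galerkin_solution_le (M : R) f w wh : A_invertible S -> 0 <= K ->
  opnorm_Ainv (fun u => u - Pi u) <= M -> f != 0 -> solves f w ->
  P wh -> (forall v, P v -> forma wh v = forma w v) ->
  hnorm wh <= (Ainv_norm S + K * M) * hnorm f.
Proof.
move=> A_inv K_ge0 res_le f0 fw Pwh wh_galerkin.
have res_f : hnorm (w - Pi w) <= M * hnorm f.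
  rewrite -ler_pdivrMr ?hnorm_gt0 // (le_trans _ res_le) //.
  apply: (opnorm_Ainv_ge A_inv (T := fun u => u - Pi u)) => // u.
  exact: orth_proj_residual_le.
have err : hnorm (w - wh) <= K * M * hnorm f.
  rewrite -mulrA (le_trans (quasi_opt Pwh _)) ?ler_wpM2l // => v Pv.
  by rewrite (formBl (@forma_linl _ S)) wh_galerkin // subrr.
rewrite -[wh](subKr w) mulrDl (le_trans (hnormB _ _)) // lerD //.
exact: Ainv_norm_ge.
Qed.

End Galerkin.

Section InfSup.
Variables (R : realType) (S : setting R) (CG1 CG2 : R).
Hypotheses (garding_S : garding S CG1 CG2) (A_inv : A_invertible S).
Variables (P : set (sH S)) (Pi : sH S -> sH S) (K M : R).
Hypotheses (P_fin : fin_dim_subspace P) (Pi_orth : orth_proj P Pi).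
Hypotheses (K_ge0 : 0 <= K) (quasi_opt : quasi_optimal P Pi K).
Hypothesis residual_le : opnorm_Ainv (fun u => u - Pi u) <= M.

Definition shifted_forma (u v : sH S) : R[i] := forma u v + CG2%:C * hip (emb u) (emb v).

Lemma shifted_forma_linl c u u' w :
  shifted_forma (c *: u + u') w = c * shifted_forma u w + shifted_forma u' w.
Proof.
rewrite /shifted_forma forma_linl emb_linear.
by rewrite (ipDl (hip_inner _)) (ipZl (hip_inner _)); ring.
Qed.

Lemma shifted_forma_antilinr c u v v' :
  shifted_forma u (c *: v + v') = cconj c * shifted_forma u v + shifted_forma u v'.
Proof.
rewrite /shifted_forma forma_antilinr emb_linear.
by rewrite (ipDr (hip_inner _)) (ipZr (hip_inner _)); ring.
Qed.

Lemma shifted_forma_coercive x : CG1 * hnorm x ^+ 2 <= cabs (shifted_forma x x).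
Proof. by case: garding_S => _ [_]; rewrite /shifted_forma hip_norm -rmorphM. Qed.

Lemma shifted_forma_represents uh :
  exists2 x, P x & forall v, P v -> shifted_forma x v = forma uh v.
Proof.
have [n [e Pe]] := fin_dim_span P_fin.
have [CG1_gt0 _] := garding_S.
have nondeg z : P z -> (forall v, P v -> shifted_forma z v = 0) -> z = 0.
  move=> Pz z0; apply: hnorm_eq0; apply/eqP; rewrite -sqrf_eq0 eq_le sqr_ge0 andbT.
  rewrite -(pmulr_rle0 _ CG1_gt0) (le_trans (shifted_forma_coercive z)) //.
  by rewrite z0 // (cabsR 0) normr0.
have [x [Px xP]] := form_represents shifted_forma_linl shifted_forma_antilinr Pe nondeg
  (fun c => @forma_antilinr _ S c uh).
by exists x.
Qed.

Lemma shifted_representative_le uh x : P uh -> P x -> x != 0 ->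
  (forall v, P v -> shifted_forma x v = forma uh v) ->
  hnorm uh <= (1 + CG2 * (Ainv_norm S + K * M)) * hnorm x.
Proof.
move=> Puh Px x0 xP; have [_ [CG2_gt0 _]] := garding_S.
have embx0 : emb x != 0.
  apply: contraNneq x0 => embx0; apply/eqP/(@emb_inj _ S).
  by rewrite embx0 (linear_map0 (@emb_linear _ S)).
have [w xw] := solves_exists A_inv (emb x).
have [wh [Pwh whP]] := galerkin_exists P_fin Pi_orth quasi_opt w.
(* On H_h, a(uh - x, .) = CG2 (x, .)_{H_0} = CG2 a(w, .) = CG2 a(wh, .). *)
have uh_eq : uh = x + CG2%:C *: wh.
  apply/eqP; rewrite eq_sym -subr_eq0; apply/eqP.
  apply: (galerkin_kernel_eq0 Pi_orth quasi_opt).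
    have P_sub : subspace P by case: P_fin.
    apply: (subspaceB P_sub) => //; apply: (subspaceD P_sub) => //.
    exact: (subspaceZ P_sub).
  have a_linl := @forma_linl _ S.
  move=> v Pv; rewrite !(formBl a_linl, formDl a_linl, formZl a_linl).
  by rewrite whP // xw -xP // /shifted_forma; ring.
have A_ge0 : 0 <= Ainv_norm S by apply: (opnorm_Ainv_ge0 A_inv (T := id)) embx0.
have M_ge0 : 0 <= M.
  apply: le_trans residual_le; apply: (opnorm_Ainv_ge0 A_inv _ embx0) => u.
  exact: orth_proj_residual_le.
rewrite uh_eq mulrDl mul1r (le_trans (hnormD _ _)) // lerD2l hnormZ cabsR.
rewrite (ger0_norm (ltW CG2_gt0)) -mulrA ler_wpM2l ?(ltW CG2_gt0) //.
have := galerkin_solution_le Pi_orth quasi_opt A_inv K_ge0 residual_le embx0 xw Pwh whP.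
by move/le_trans; apply; rewrite ler_wpM2l ?emb_norm // addr_ge0 // mulr_ge0.
Qed.

Theorem galerkin_infsup_ge uh : P uh -> uh != 0 ->
  CG1 / (1 + CG2 * (Ainv_norm S + K * M)) <= infsup_inner P uh.
Proof.
move=> Puh uh0; have [CG1_gt0 _] := garding_S.
have [x Px xP] := shifted_forma_represents uh.
have x0 : x != 0.
  apply: contraNneq uh0 => x0; apply/eqP/(galerkin_kernel_eq0 Pi_orth quasi_opt Puh).
  by move=> v Pv; rewrite -xP // x0 (form0l shifted_forma_linl).
have uh_le := shifted_representative_le Puh Px x0 xP.
set D := 1 + _ in uh_le *.
have D_gt0 : 0 < D.
  by rewrite -(pmulr_lgt0 _ (hnorm_gt0 x0)) (lt_le_trans (hnorm_gt0 uh0)).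
apply: le_trans (infsup_inner_ge uh0 Px x0).
rewrite -xP // ler_pdivlMr ?mulr_gt0 ?hnorm_gt0 // (le_trans _ (shifted_forma_coercive x)) //.
rewrite expr2 !mulrA ler_wpM2r ?hnorm_ge0 // mulrAC ler_pdivrMr // -mulrA ler_pM2l //.
by rewrite mulrC.
Qed.

End InfSup.

Section Constants.
Variable R : realType.

Lemma ler_1Dexpr (x : R) n : (0 < n)%N -> 0 <= x -> x <= 1 + x ^+ n.
Proof.
move=> n_gt0 x_ge0; have [x_le1|x_gt1] := leP x 1.
  by have := exprn_ge0 n x_ge0; lra.
by have := ler_eXnr n_gt0 (ltW x_gt1); lra.
Qed.

Definition infsup_const (eps c : R) : R :=
  (1 + eps / c) / c + (1 + eps / c) + (1 + eps / c) ^+ 2 + eps.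

Lemma infsup_const_gt0 eps c : 0 < eps -> 0 < c -> 0 < infsup_const eps c.
Proof.
move=> eps_gt0 c_gt0; have ec_ge0 : 0 <= eps / c by rewrite divr_ge0 // ltW.
have : 0 <= (1 + eps / c) / c by rewrite divr_ge0 ?addr_ge0 // ltW.
have := sqr_ge0 (1 + eps / c); rewrite /infsup_const; lra.
Qed.

(* Each of x, x^p A, x^(p+1) A and (x^p A)^2 is bounded by a multiple of A,
   using x^(2p) A <= eps and c <= A. *)
Lemma quasi_opt_residual_product_le (x A c eps : R) p :
  (0 < p)%N -> 0 < x -> 0 < c -> c <= A -> x ^+ (2 * p) * A <= eps ->
  (1 + x ^+ p * A) * (x + x ^+ p * A) <= infsup_const eps c * A.
Proof.
move=> p_gt0 x_gt0 c_gt0 c_le_A small.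
have A_gt0 := lt_le_trans c_gt0 c_le_A.
have [x_ge0 c_ge0 A_ge0] := And3 (ltW x_gt0) (ltW c_gt0) (ltW A_gt0).
have eps_ge0 : 0 <= eps by rewrite (le_trans _ small) // mulr_ge0 // exprn_ge0.
have ec_ge0 : 0 <= eps / c by rewrite divr_ge0.
set Q := 1 + eps / c; set y := x ^+ p.
have y_ge0 : 0 <= y by rewrite exprn_ge0.
have yA2 : (y * A) ^+ 2 <= eps * A.
  by rewrite exprMn expr2 mulrA ler_wpM2r // -expr2 /y -exprM mulnC.
have eps_le : eps <= eps / c * A by rewrite mulrAC ler_pdivlMr // ler_wpM2l.
have yA : y * A <= Q * A.
  have : y * A <= A + eps by nra.
  rewrite /Q mulrDl mul1r; lra.
have x_le : x <= Q.
  have p2_gt0 : (0 < 2 * p)%N by rewrite muln_gt0.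
  apply: le_trans (ler_1Dexpr p2_gt0 x_ge0) _; rewrite lerD2l.
  by rewrite ler_pdivlMr // (le_trans _ small) // ler_wpM2l // exprn_ge0.
have xA : x <= Q / c * A.
  by rewrite mulrAC ler_pdivlMr //; nra.
have xyA : x * (y * A) <= Q ^+ 2 * A.
  by rewrite expr2 -mulrA ler_pM // mulr_ge0.
rewrite /infsup_const -/Q; lra.
Qed.

Lemma ler_infsup_bound (G1 G2 A E E' : R) : 0 < G1 -> 0 <= G2 -> 0 < A ->
  0 <= E -> E <= E' * A ->
  1 / (G1^-1 * (1 + G2 * (1 + E') * A)) <= G1 / (1 + G2 * (A + E)).
Proof.
move=> G1_gt0 G2_ge0 A_gt0 E_ge0 E_le.
have E'_ge0 : 0 <= E' by rewrite -(pmulr_lge0 _ A_gt0) (le_trans E_ge0).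
have one_add_gt0 (y : R) : 0 <= y -> 0 < 1 + y by move=> ?; lra.
rewrite mul1r invfM invrK ler_pM2l // lef_pV2 ?posrE ?one_add_gt0 //.
- by rewrite lerD2l -mulrA ler_wpM2l // mulrDl mul1r lerD2l.
- by rewrite !mulr_ge0 ?addr_ge0 // ltW.
- by rewrite mulr_ge0 ?addr_ge0 // ltW.
Qed.

End Constants.

Local Close Scope complex_scope.

Theorem corollary4p10 (R : realType)
  (S : R -> setting R)                       (* all objects for wavenumber k *)
  (CG1 CG2 : R -> R)                         (* Gårding constants, for each k *)
  (hS : forall k, 0 < k -> garding (S k) (CG1 k) (CG2 k))
  (hinv : forall k, 0 < k -> A_invertible (S k))
  (hlow : forall k0 : R, 0 < k0 -> exists c : R, 0 < c /\
            forall k, k0 <= k -> c <= Ainv_norm (S k))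
  (p : nat) (hp : (0 < p)%N)
  (Hh : forall k : R, R -> set (sH (S k)))   (* the spaces H_h *)
  (hHh : forall k h, 0 < k -> 0 < h -> fin_dim_subspace (Hh k h))
  (Pi : forall k : R, R -> sH (S k) -> sH (S k))
  (hPi : forall k h, 0 < k -> 0 < h -> orth_proj (Hh k h) (Pi k h))
  (C1 C2 C3 : R) (hC1 : 0 < C1) (hC2 : 0 < C2) (hC3 : 0 < C3)
  (hyp : forall k h, 0 < k -> 0 < h ->
     (k * h) ^+ (2 * p) * Ainv_norm (S k) <= C1 ->
     (forall (u uh : sH (S k)), Hh k h uh ->
        (forall vh, Hh k h vh -> forma (u - uh) vh = 0) ->
        hnorm (u - uh) <=
          C2 * (1 + (k * h) ^+ p * Ainv_norm (S k)) * hnorm (u - Pi k h u)) /\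
     opnorm_Ainv (fun u => u - Pi k h u) <=
       C3 * (k * h + (k * h) ^+ p * Ainv_norm (S k))) :
  forall k0 : R, 0 < k0 ->
  forall eps : R, 0 < eps -> eps <= C1 ->
  exists C4 : R, 0 < C4 /\
    forall k h, k0 <= k -> 0 < h ->
      (k * h) ^+ (2 * p) * Ainv_norm (S k) <= eps ->
      forall uh, Hh k h uh -> uh != 0 ->
        1 / ((CG1 k)^-1 * (1 + CG2 k * (1 + C2 * C3 * C4) * Ainv_norm (S k)))
          <= infsup_inner (Hh k h) uh.
Proof.
move=> k0 k0_gt0 eps eps_gt0 eps_le_C1.
have [c [c_gt0 c_le]] := hlow k0 k0_gt0.
exists (infsup_const eps c); split=> [|k h k0_le h_gt0 small uh Puh uh0].
  exact: infsup_const_gt0.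
have k_gt0 := lt_le_trans k0_gt0 k0_le.
have [CG1_gt0 [CG2_gt0 _]] := hS k k_gt0.
have [quasi_opt residual_le] := hyp k h k_gt0 h_gt0 (le_trans small eps_le_C1).
have kh_gt0 : 0 < k * h by rewrite mulr_gt0.
have A_gt0 := lt_le_trans c_gt0 (c_le k k0_le).
have prod_le := quasi_opt_residual_product_le hp kh_gt0 c_gt0 (c_le k k0_le) small.
set A := Ainv_norm (S k) in A_gt0 small prod_le quasi_opt residual_le *.
have yA_ge0 : 0 <= (k * h) ^+ p * A by rewrite mulr_ge0 ?exprn_ge0 // ltW.
have K_ge0 : 0 <= C2 * (1 + (k * h) ^+ p * A) by rewrite mulr_ge0 ?addr_ge0 // ltW.
apply: le_trans (galerkin_infsup_ge (hS k k_gt0) (hinv k k_gt0) (hHh k h k_gt0 h_gt0)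
  (hPi k h k_gt0 h_gt0) K_ge0 quasi_opt residual_le Puh uh0).
have M_ge0 : 0 <= C3 * (k * h + (k * h) ^+ p * A) by rewrite mulr_ge0 ?addr_ge0 // ltW.
rewrite -/A; apply: ler_infsup_bound => //; [exact: ltW | exact: mulr_ge0 |].
rewrite mulrACA -[C2 * C3 * _ * A]mulrA ler_wpM2l //.
exact: mulr_ge0 (ltW hC2) (ltW hC3).
Qed.
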